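(* Consider an instance of the Profile Matching Problem (as defined in the context), with metric $d$ equal to either the Hamming distance $d_h$ or the Weighted Hamming distance $d_w$. Let $\mu_1$ and $\mu_2$ be two stable matchings for this instance. Then $d\bigl(x,\mu_1(x)\bigr)=d\bigl(x,\mu_2(x)\bigr)$ for every participant $x\in\mathcal{M}\cup\mathcal{W}$.
   Context: Profile Matching Problem: there is a set $\mathcal{M}$ of $n$ men and a set $\mathcal{W}$ of $n$ women, and an integer $k\ge 1$. Each participant $x\in\mathcal{M}\cup\mathcal{W}$ has a profile $\mathbf{a}(x)=(a_1(x),\dots,a_k(x))\in Q_k=\{0,1\}^k$. Two metrics on $Q_k$ are considered: the Hamming distance $d_h(\mathbf{a},\mathbf{a}')=\sum_{i=1}^k\mathbf{1}(a_i\neq a_i')$ and the Weighted Hamming distance $d_w(\mathbf{a},\mathbf{a}')=\sum_{i=1}^k 2^{-i}\mathbf{1}(a_i\neq a_i')$. For participants $x,y$ write $d(x,y)=d(\mathbf{a}(x),\mathbf{a}(y))$. Each participant $x$ has a tie-breaking list $T_x$, a strict total order on the members of the opposite sex. The strict preference list $P_x$ of $x$ ranks the members of the opposite sex in increasing order of $d(x,\cdot)$, and members at equal distance from $x$ are ordered according to $T_x$; write $y\succ_x y'$ if $x$ ranks $y$ above $y'$ in $P_x$. A matching is a map $\mu$ from $\mathcal{M}\cup\mathcal{W}$ to itself with $\mu(m)\in\mathcal{W}\cup\{m\}$ for men, $\mu(w)\in\mathcal{M}\cup\{w\}$ for women, and $\mu(m)=w\iff\mu(w)=m$. A pair $(m,w)$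 is blocking for $\mu$ if $w\succ_m\mu(m)$ and $m\succ_w\mu(w)$; $\mu$ is stable if it has no blocking pair. *)

From mathcomp Require Import all_boot all_order all_algebra.
Set Implicit Arguments. Unset Strict Implicit. Unset Printing Implicit Defensive.
Import Order.TTheory GRing.Theory Num.Theory.
Local Open Scope ring_scope.

(* Profiles: elements of Q_k = {0,1}^k; coordinate i : 'I_k is the paper's a_{i+1}. *)
Definition profile (k : nat) := {ffun 'I_k -> bool}.

Definition hamming (k : nat) (a b : profile k) : rat :=
  \sum_(i < k) ((a i != b i)%:R).

Definition whamming (k : nat) (a b : profile k) : rat :=
  \sum_(i < k) ((a i != b i)%:R / 2%:R ^+ i.+1).

Inductive metric_kind := Hamming | WeightedHamming.

Definition dist (mk : metric_kind) (k : nat) : profile k -> profile k -> rat :=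
  match mk with Hamming => @hamming k | WeightedHamming => @whamming k end.

(* Participants: inl i = man i, inr j = woman j. *)
Definition participant (n : nat) := ('I_n + 'I_n)%type.

Definition is_man n (p : participant n) : bool := if p is inl _ then true else false.
Definition pidx n (p : participant n) : 'I_n := match p with inl i => i | inr i => i end.
Definition opposite n (x y : participant n) : bool := is_man x != is_man y.

(* Tie-breaking lists: T x : 'I_n -> nat ranks (by index) the members of the
   opposite sex of x (smaller rank = higher in T_x); it must be injective,
   i.e. a strict total order. *)
Definition tiebreak_ok n (T : participant n -> 'I_n -> nat) : Prop :=
  forall x, injective (T x).

(* y >_x z in P_x.  y must be of the opposite sex of x; z is either x itself
   (x unmatched: any member of the opposite sex is preferred to being single)
   or of the opposite sex, compared by distance then by T_x. *)
Definition prefers (mk : metric_kind) k n (a : participant n -> profile k)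
    (T : participant n -> 'I_n -> nat) (x y z : participant n) : Prop :=
  opposite x y /\
  (z = x \/
   (opposite x z /\
    (dist mk (a x) (a y) < dist mk (a x) (a z) \/
     (dist mk (a x) (a y) = dist mk (a x) (a z) /\
      (T x (pidx y) < T x (pidx z))%N)))).

Definition is_matching n (mu : participant n -> participant n) : Prop :=
  (forall m : 'I_n, mu (inl m) = inl m \/ exists w, mu (inl m) = inr w) /\
  (forall w : 'I_n, mu (inr w) = inr w \/ exists m, mu (inr w) = inl m) /\
  (forall (m w : 'I_n), mu (inl m) = inr w <-> mu (inr w) = inl m).

Definition blocking (mk : metric_kind) k n (a : participant n -> profile k)
    (T : participant n -> 'I_n -> nat) (mu : participant n -> participant n)
    (m w : 'I_n) : Prop :=
  prefers mk a T (inl m) (inr w) (mu (inl m)) /\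
  prefers mk a T (inr w) (inl m) (mu (inr w)).

Definition stable (mk : metric_kind) k n (a : participant n -> profile k)
    (T : participant n -> 'I_n -> nat) (mu : participant n -> participant n) : Prop :=
  is_matching mu /\ forall m w : 'I_n, ~ blocking mk a T mu m w.

From mathcomp Require Import all_boot all_order all_algebra.
Set Implicit Arguments. Unset Strict Implicit. Unset Printing Implicit Defensive.
Import Order.TTheory GRing.Theory Num.Theory.

(* Only the symmetry of the metric matters.  Suppose two stable matchings mu
   and nu disagree on some participant, and let delta be the least distance
   from a disagreeing participant to either of its two partners, attained
   wlog by z with d(z, mu z) = delta < d(z, nu z).  Call x tight if
   d(x, mu x) = delta and x strictly prefers mu x to nu x.  Stability of nu
   and minimality of delta force the mu-partner y of a tight x to be at
   distance delta from nu y and to strictly prefer nu y to x; symmetrically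
   nu y is tight again.  So nu o mu maps the finite set of tight participants
   injectively, hence bijectively, into itself; z is tight, so z = nu (mu w)
   for a tight w, and then d(z, nu z) = d(mu w, nu (mu w)) = delta. *)

Section LexicographicStability.
Local Open Scope order_scope.
Context {disp : Order.disp_t} {R : orderType disp}.
Variables (P : finType) (opp : rel P) (d : P -> P -> R) (T : P -> P -> nat).
Hypothesis d_sym : forall x y, d x y = d y x.
Hypothesis T_inj : forall x y z, opp x y -> opp x z -> T x y = T x z -> y = z.

Definition lex_prefers x y z :=
  (d x y < d x z) || ((d x y == d x z) && (T x y < T x z)%N).

Lemma lex_prefers_irr x y : lex_prefers x y y = false.
Proof. by rewrite /lex_prefers ltxx eqxx ltnn. Qed.

Definition stable_involution (mu : P -> P) :=
  [/\ involutive mu, forall x, opp x (mu x) &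
      forall x y, opp x y -> lex_prefers x y (mu x) -> lex_prefers y x (mu y) -> False].

Definition disagreement_bound (delta : R) (mu nu : P -> P) :=
  forall z, d z (mu z) != d z (nu z) -> delta <= d z (mu z).

Definition prefers_at (delta : R) (mu nu : P -> P) x :=
  (d x (mu x) == delta) && lex_prefers x (mu x) (nu x).

Lemma prefers_at_partner delta mu nu x :
  stable_involution mu -> stable_involution nu -> disagreement_bound delta nu mu ->
  prefers_at delta mu nu x -> prefers_at delta nu mu (mu x).
Proof.
move=> [mu_inv mu_opp _] [nu_inv nu_opp nu_stable] bound /andP[/eqP dxy pxy].
set y := mu x; set x' := nu y.
have my : mu y = x by exact: mu_inv.
have dyx : d y x = delta by rewrite d_sym.
have not_blocking : lex_prefers y x x' -> False := nu_stable x y (mu_opp x) pxy.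
have dyx' : d y x' = delta.
  case: (ltgtP (d y x') delta) => // [lt|gt].
    by move: (bound y); rewrite my dyx (lt_eqF lt) leNgt lt => /(_ isT).
  by case: not_blocking; rewrite /lex_prefers dyx gt.
have x'x : x' != x.
  apply/eqP => e; have nux : nu x = y by rewrite -e /x' nu_inv.
  by move: pxy; rewrite nux lex_prefers_irr.
have Tyx' : (T y x' < T y x)%N.
  case: (ltngtP (T y x') (T y x)) => // [gt|e].
    by case: not_blocking; rewrite /lex_prefers dyx dyx' ltxx eqxx gt.
  have oyx : opp y x by rewrite -my mu_opp.
  by case/eqP: x'x; exact: T_inj (nu_opp y) oyx e.
by rewrite /prefers_at /lex_prefers my dyx' dyx eqxx ltxx Tyx'.
Qed.

Lemma partner_dist_le delta mu nu x :
  stable_involution mu -> stable_involution nu ->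
  disagreement_bound delta mu nu -> disagreement_bound delta nu mu ->
  d x (mu x) = delta -> d x (nu x) <= delta.
Proof.
move=> mu_st nu_st bmn bnm dx; rewrite leNgt; apply/negP => lt.
have [mu_inv _ _] := mu_st; have [nu_inv _ _] := nu_st.
pose S := [set z | prefers_at delta mu nu z].
have sigma_inj : injective (nu \o mu).
  exact: inj_comp (inv_inj nu_inv) (inv_inj mu_inv).
have sigmaS : (nu \o mu) @: S = S.
  apply/eqP; rewrite eqEcard card_imset // leqnn andbT.
  apply/subsetP => _ /imsetP[z zS ->]; move: zS; rewrite !inE => zS.
  exact: prefers_at_partner (prefers_at_partner _ _ _ zS).
have : x \in (nu \o mu) @: S.
  by rewrite sigmaS inE /prefers_at dx eqxx /lex_prefers dx lt.
case/imsetP=> w; rewrite inE => /(prefers_at_partner mu_st nu_st bnm).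
move=> /andP[/eqP dw _] /= xE.
by move: lt; rewrite xE nu_inv d_sym dw ltxx.
Qed.

Lemma partner_dist_eq delta mu nu x :
  stable_involution mu -> stable_involution nu ->
  disagreement_bound delta mu nu -> disagreement_bound delta nu mu ->
  d x (mu x) = delta -> d x (nu x) = delta.
Proof.
move=> mu_st nu_st bmn bnm dx.
have [agree|disagree] := eqVneq (d x (nu x)) (d x (mu x)); first by rewrite agree.
by apply/eqP; rewrite eq_le (partner_dist_le mu_st nu_st bmn bnm dx) bnm.
Qed.

Theorem stable_involutions_partner_dist mu1 mu2 :
  stable_involution mu1 -> stable_involution mu2 ->
  forall x, d x (mu1 x) = d x (mu2 x).
Proof.
move=> st1 st2 x; apply/eqP; apply: contraT => neq.
pose gap z := Order.min (d z (mu1 z)) (d z (mu2 z)).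
have [z disagree z_min] :=
  @arg_minP _ _ _ x [pred z | d z (mu1 z) != d z (mu2 z)] gap neq.
set delta := gap z in z_min.
have b12 : disagreement_bound delta mu1 mu2.
  by move=> y /z_min; rewrite le_min => /andP[].
have b21 : disagreement_bound delta mu2 mu1.
  by move=> y; rewrite eq_sym => /z_min; rewrite le_min => /andP[].
have [le12|lt21] := leP (d z (mu1 z)) (d z (mu2 z)).
- have d_z : d z (mu1 z) = delta by rewrite /delta /gap min_l.
  by move: disagree; rewrite /= (partner_dist_eq st1 st2 b12 b21 d_z) d_z eqxx.
- have d_z : d z (mu2 z) = delta by rewrite /delta /gap min_r // ltW.
  by move: disagree; rewrite /= (partner_dist_eq st2 st1 b21 b12 d_z) d_z eqxx.
Qed.

End LexicographicStability.

Local Open Scope ring_scope.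

Lemma dist_sym mk k (a b : profile k) : dist mk a b = dist mk b a.
Proof. by case: mk; apply: eq_bigr => i _; rewrite eq_sym. Qed.

Definition swap_sex n (x : participant n) : participant n :=
  match x with inl i => inr i | inr i => inl i end.

Lemma swap_sexK n : involutive (@swap_sex n).
Proof. by case. Qed.

Section Matchings.
Variables (n : nat) (mu : participant n -> participant n).
Hypothesis mu_matching : is_matching mu.

Lemma is_matching_swap : is_matching (@swap_sex n \o mu \o @swap_sex n).
Proof.
have [men [women pair]] := mu_matching.
split; [|split] => [i|i|i j] /=.
- by case: (women i) => [->|[j ->]]; [left|right; exists j].
- by case: (men i) => [->|[j ->]]; [left|right; exists j].
- split=> /(congr1 (@swap_sex n)); rewrite swap_sexK /= => e.
    by rewrite (proj2 (pair j i) e).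
  by rewrite (proj1 (pair j i) e).
Qed.

Lemma matching_involutive : involutive mu.
Proof.
have [men [women pair]] := mu_matching.
case=> [m|w].
  by case: (men m) => [e|[w e]]; rewrite e // (proj1 (pair m w) e).
by case: (women w) => [e|[m e]]; rewrite e // (proj2 (pair m w) e).
Qed.

(* With as many men as women, the partner map on women is a bijection onto
   the men as soon as no woman is single. *)
Lemma single_man_single_woman m :
  mu (inl m) = inl m -> exists w, mu (inr w) = inr w.
Proof.
have [_ [women pair]] := mu_matching.
move=> single; case: (pickP (fun w => mu (inr w) == inr w)) => [w /eqP|none].
  by exists w.
pose g w := pidx (mu (inr w)).
have gE w : mu (inr w) = inl (g w).
  by case: (women w) => [e|[m' e]]; [move: (none w); rewrite e eqxx | rewrite /g e].
have g_inj : injective g.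
  move=> w1 w2 e; have := proj2 (pair _ w1) (gE w1).
  by rewrite e (proj2 (pair _ w2) (gE w2)) => -[].
have [g' _ gK] := injF_bij g_inj.
by move: (proj2 (pair m (g' m))); rewrite gE gK single => /(_ erefl).
Qed.

End Matchings.

Section ProfileMatching.
Variables (mk : metric_kind) (n k : nat) (a : participant n -> profile k).
Variable T : participant n -> 'I_n -> nat.

Definition pdist (x y : participant n) := dist mk (a x) (a y).
Definition prank (x y : participant n) := T x (pidx y).

Lemma pdist_sym x y : pdist x y = pdist y x.
Proof. exact: dist_sym. Qed.

Lemma prank_inj : tiebreak_ok T ->
  forall x y z, opposite x y -> opposite x z -> prank x y = prank x z -> y = z.
Proof. by move=> T_inj [?|?] [?|?] [?|?] //= _ _ /T_inj /= ->. Qed.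

Lemma prefers_of_lex x y z : opposite x y -> opposite x z ->
  lex_prefers pdist prank x y z -> prefers mk a T x y z.
Proof.
move=> oxy oxz pref; split=> //; right; split=> //.
by case/orP: pref => [lt|/andP[/eqP deq lt]]; [left|right].
Qed.

Lemma stable_opposite mu : stable mk a T mu -> forall x, opposite x (mu x).
Proof.
move=> [mu_matching no_blocking].
have [men [women _]] := mu_matching.
have singles_block m w : mu (inl m) = inl m -> mu (inr w) = inr w -> False.
  by move=> sm sw; apply: (no_blocking m w); split; split=> //; left.
case=> [m|w].
  case: (men m) => [single|[w ->]] //.
  have [w sw] := single_man_single_woman mu_matching single.
  by case: (singles_block _ _ single sw).
case: (women w) => [single|[m ->]] //.
have single' : (@swap_sex n \o mu \o @swap_sex n) (inl w) = inl w.
  by rewrite /= single.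
have [m /(congr1 (@swap_sex n))] :=
  single_man_single_woman (is_matching_swap mu_matching) single'.
rewrite /= swap_sexK => sm.
by case: (singles_block m w sm single).
Qed.

Lemma stable_involution_of_stable mu :
  stable mk a T mu -> stable_involution (@opposite n) pdist prank mu.
Proof.
move=> st; have [mu_matching no_blocking] := st.
have mu_opp := stable_opposite st.
split=> // [|[m|w] [m'|w'] //= _ pref pref'].
- exact: matching_involutive.
- by apply: (no_blocking m w'); split; apply: prefers_of_lex.
- by apply: (no_blocking m' w); split; apply: prefers_of_lex.
Qed.

End ProfileMatching.

Theorem lemma3p1 (mk : metric_kind) (n k : nat) (hk : (0 < k)%N)
    (a : participant n -> profile k) (T : participant n -> 'I_n -> nat)
    (hT : tiebreak_ok T) (mu1 mu2 : participant n -> participant n) :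
  stable mk a T mu1 -> stable mk a T mu2 ->
  forall x : participant n, dist mk (a x) (a (mu1 x)) = dist mk (a x) (a (mu2 x)).
Proof.
move=> st1 st2.
exact: (stable_involutions_partner_dist (@pdist_sym mk n k a) (prank_inj hT)
          (stable_involution_of_stable st1) (stable_involution_of_stable st2)).
Qed.
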